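(* Let $n\ge 1$, $m\ge 2$, $0\le k\le n-1$, and let $\mathcal{C}^k_{ac}$ be the class of all complete acyclic $k$-bounded CP-nets over $n$ variables of domain size $m$, over the instance space $\mathcal{X}_{swap}$. For every $c\in\mathcal{C}^k_{ac}$, letting $e_c$ denote the number of edges of $c$, \[(m-1)\mathcal{M}_k\le\mathrm{TD}(c,\mathcal{C}^k_{ac})\le e_c+n(m-1)\mathcal{U}_k.\]
   Context: Variables $V=\{v_1,\dots,v_n\}$, each with a finite domain of size $m$. An outcome assigns a value to every variable; $\mathcal{O}_X$ denotes assignments to $X\subseteq V$. A complete CP-net specifies for each $v_i$ a parent set $Pa(v_i)\subseteq V\setminus\{v_i\}$ and, for each context $\gamma\in\mathcal{O}_{Pa(v_i)}$, a strict total order $\succ^{v_i}_\gamma$ on $D_{v_i}$; parents are non-dummy. Its edges are the pairs $(v_j,v_i)$ with $v_j\in Pa(v_i)$; acyclic means this graph is acyclic; $k$-bounded means all $|Pa(v_i)|\le k$. Improving flip: changing only $v_i$ to a value preferred under $\succ^{v_i}_{o[Pa(v_i)]}$; $o'\succ o$ iff a nonempty sequence of improving flips leads from $o$ to $o'$. A swap is an ordered pair $x=(x.1,x.2)$ of outcomes differing in exactly one variable; $\mathcal{X}_{swap}$ contains exactly one ordering of each such pair (fixed arbitrarily); a CP-net $N$ is the concept $c_N(x)=1$ iff $x.1\succ x.2$. $\mathrm{TD}(c,\mathcal{C})$ is the minimum size of a set of labeled examples consistent with $c$ and with no other concept of $\mathcal{C}$. $\mathcal{M}_k=(n-k)m^k+\frac{m^k-1}{m-1}$.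 $\mathcal{U}_k$ is the smallest size of a set $S\subseteq\{1,\dots,m\}^{n-1}$ whose projection onto every set of $k$ coordinates contains all $m^k$ vectors. *)

From mathcomp Require Import all_boot.
Set Implicit Arguments. Unset Strict Implicit. Unset Printing Implicit Defensive.

Notation outcome n m := {ffun 'I_n -> 'I_m}.

(* A (complete) CP-net: parent sets, and for every variable i and every
   outcome o a binary relation on D_i, meant as the strict total order
   >^{v_i}_{o[Pa(v_i)]} ("a preferred to b").  Dependence on the context
   o[Pa(v_i)] only is imposed in [valid_cpnet]. *)
Notation cpnet n m :=
  ({ffun 'I_n -> {set 'I_n}} * {ffun 'I_n * outcome n m -> {ffun 'I_m * 'I_m -> bool}})%type.

Section CPnets.
Variables n m : nat.

Definition pa (N : cpnet n m) (i : 'I_n) : {set 'I_n} := N.1 i.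
Definition pref (N : cpnet n m) (i : 'I_n) (o : outcome n m) (a b : 'I_m) : bool :=
  N.2 (i, o) (a, b).

Definition dep_edge (N : cpnet n m) : rel 'I_n := fun j i => j \in pa N i.

Definition acyclic (N : cpnet n m) : bool :=
  [forall i, forall j, dep_edge N i j ==> ~~ connect (dep_edge N) j i].

Definition valid_cpnet (k : nat) (N : cpnet n m) : bool :=
  [&&
      [forall i, forall o : outcome n m, forall a, ~~ pref N i o a a],
      [forall i, forall o : outcome n m, forall a, forall b, forall c,
          pref N i o a b && pref N i o b c ==> pref N i o a c],
      [forall i, forall o : outcome n m, forall a, forall b,
          (a != b) ==> pref N i o a b || pref N i o b a],
      [forall i, i \notin pa N i],
      [forall i, forall o : outcome n m, forall o' : outcome n m,
          [forall j in pa N i, o j == o' j] ==>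
          [forall a, forall b, pref N i o a b == pref N i o' a b]],
      [forall i, forall j in pa N i, exists o : outcome n m, exists o' : outcome n m,
          [forall l, (l != j) ==> (o l == o' l)] &&
          [exists a, exists b, pref N i o a b != pref N i o' a b]],
      [forall i, #|pa N i| <= k]
    & acyclic N].

Definition edges (N : cpnet n m) : nat := \sum_i #|pa N i|.

Definition iflip (N : cpnet n m) : rel (outcome n m) := fun o o' =>
  [exists i, [&& [forall j, (j != i) ==> (o' j == o j)], o' i != o i &
                 pref N i o (o' i) (o i)]].

Definition succ (N : cpnet n m) (a b : outcome n m) : bool :=
  [exists o1 : outcome n m, iflip N b o1 && connect (iflip N) o1 a].

Definition is_swap (x : outcome n m * outcome n m) : bool :=
  [exists i, (x.1 i != x.2 i) && [forall j, (j != i) ==> (x.1 j == x.2 j)]].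

Definition swap_space (X : {set outcome n m * outcome n m}) : bool :=
  [forall x : outcome n m * outcome n m, (x \in X) ==> is_swap x] &&
  [forall x : outcome n m * outcome n m, is_swap x ==> ((x \in X) (+) ((x.2, x.1) \in X))].

Definition concept (N : cpnet n m) (x : outcome n m * outcome n m) : bool :=
  succ N x.1 x.2.

Definition teaching_set (k : nat) (X S : {set outcome n m * outcome n m})
    (N : cpnet n m) : bool :=
  (S \subset X) &&
  [forall N' : cpnet n m, valid_cpnet k N' ==>
     ([forall x in S, concept N' x == concept N x] ==>
      [forall x in X, concept N' x == concept N x])].

(* teaching dimension (X itself is always a teaching set, so the min is attained) *)
Definition TD (k : nat) (X : {set outcome n m * outcome n m}) (N : cpnet n m) : nat :=
  \big[minn/#|X|]_(S : {set outcome n m * outcome n m} | teaching_set k X S N) #|S|.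

End CPnets.

(* M_k = (n-k) m^k + (m^k - 1)/(m - 1)  (exact division for m >= 2) *)
Definition Mk (n m k : nat) : nat := (n - k) * m ^ k + (m ^ k - 1) %/ (m - 1).

Definition k_covering (n m k : nat) (S : {set {ffun 'I_(n.-1) -> 'I_m}}) : bool :=
  [forall K : {set 'I_(n.-1)}, (#|K| == k) ==>
     [forall v : {ffun 'I_(n.-1) -> 'I_m},
        [exists s in S, [forall j in K, s j == v j]]]].

Definition Uk (n m k : nat) : nat :=
  \big[minn/#|{ffun 'I_(n.-1) -> 'I_m}|]_(S : {set {ffun 'I_(n.-1) -> 'I_m}} | @k_covering n m k S) #|S|.

(* Upper bound: the swap of v_i between the values a and b, taken in a context o,
   reveals whether a >_{o[Pa(v_i)]} b.  For every v_i and every context drawn from a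
   k-covering set S (completed by [ext]), the m-1 swaps between values that are consecutive
   in the order determine that order; one more swap per edge p -> v_i witnesses that p is a
   relevant parent.  A consistent acyclic k-bounded net then has at least the parents of N,
   every context agrees on its (at most k) parents with one drawn from S, and so the net
   agrees with N everywhere.

   Lower bound: order the variables topologically and enlarge Pa(v_i) to a set [ctx_vars i]
   of min(#earlier variables, k) earlier variables.  For each assignment g of [ctx_vars i]
   and each pair of values consecutive in the order of v_i under g, exchanging the two values
   in all contexts extending g yields another acyclic k-bounded net (after dropping dummy
   parents).  It differs from N exactly on swaps of v_i between these values in such
   contexts, so every teaching set contains one of them, and these sets of swaps are
   pairwise disjoint.  Their number is (m-1) * sum_i m^#|ctx_vars i| = (m-1) M_k. *)

From mathcomp Require Import all_boot fingroup perm zify.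
Set Implicit Arguments. Unset Strict Implicit. Unset Printing Implicit Defensive.

Lemma card_between (T : finType) (A B : {set T}) k : A \subset B -> #|A| <= k -> k <= #|B| ->
  exists C : {set T}, [/\ A \subset C, C \subset B & #|C| = k].
Proof.
move=> AB; elim: k => [|k IH].
  by move=> le_A _; exists A; split=> //; apply/eqP; rewrite -leqn0.
rewrite leq_eqVlt => /orP [/eqP <- _|lt_A lt_B]; first by exists A.
have [C [AC CB card_C]] := IH lt_A (ltnW lt_B).
have /subsetPn [x xB xC] : ~~ (B \subset C).
  by apply: contraTN lt_B => /subset_leq_card; rewrite card_C -leqNgt.
exists (x |: C); split; first exact: subset_trans AC (subsetUr _ _).
  by rewrite subUset sub1set xB.
by rewrite cardsU1 xC card_C.
Qed.

Lemma card_bigcup_le (I T : finType) (A : I -> {set T}) : #|\bigcup_i A i| <= \sum_i #|A i|.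
Proof.
elim/big_ind2: _ => [|v1 B1 v2 B2 le1 le2|//]; first by rewrite cards0.
by rewrite (leq_trans (leq_card_setU B1 B2)) ?leq_add.
Qed.

Lemma geq_bigmin_cond (I : finType) (P : pred I) (F : I -> nat) x i0 :
  P i0 -> \big[minn/x]_(i | P i) F i <= F i0.
Proof.
move=> P_i0; elim: (index_enum I) (mem_index_enum i0) => // i s IH.
rewrite big_cons inE => /orP [/eqP <-|/IH le_s].
  by rewrite P_i0 geq_minl.
by case: (P i) => //; rewrite (leq_trans (geq_minr _ _)).
Qed.

Lemma leq_bigmin (I : finType) (P : pred I) (F : I -> nat) x v :
  v <= x -> (forall i, P i -> v <= F i) -> v <= \big[minn/x]_(i | P i) F i.
Proof. by move=> le_x le_F; elim/big_ind: _ => // a b; rewrite leq_min => ->. Qed.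

Lemma leq_card_hitting (I T : finType) (D : {pred I}) (S : {pred T}) (P : I -> pred T) :
    {in D, forall q, exists2 w, w \in S & P q w} ->
    {in D &, forall q q' w, P q w -> P q' w -> q = q'} ->
  #|D| <= #|S|.
Proof.
move=> hit uniq_P; pose f q := [pick w in S | P q w].
have f_hit q : q \in D -> exists2 w, f q = Some w & (w \in S) && P q w.
  move=> /hit [w0 S_w0 P_w0]; rewrite /f.
  by case: pickP => [w|/(_ w0)]; [exists w | rewrite S_w0 P_w0].
have f_inj : {in D &, injective f}.
  move=> q q' D_q D_q'; have [w -> /andP [_ P_w]] := f_hit q D_q.
  have [w' -> /andP [_ P_w']] := f_hit q' D_q' => -[eq_w].
  by apply: uniq_P P_w _ => //; rewrite eq_w.
rewrite -(card_in_imset f_inj) -(card_imset S (@Some_inj _)) subset_leq_card //.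
by apply/subsetP => _ /imsetP [q /f_hit [w -> /andP [S_w _]] ->]; rewrite imset_f.
Qed.

Lemma card_dep_setX (I J : finType) (A : I -> {set J}) :
  #|[set q : I * J | q.2 \in A q.1]| = \sum_i #|A i|.
Proof.
rewrite -sum1_card big_mkcond /=.
rewrite [RHS](eq_bigr (fun i => \sum_j (if j \in A i then 1 else 0))) => [|i _]; last first.
  by rewrite -sum1_card big_mkcond.
rewrite (pair_big xpredT xpredT (fun i j => if j \in A i then 1 else 0)) /=.
by apply: eq_bigr => q _; rewrite inE.
Qed.

Lemma geometric_sum m k : 0 < m -> (m - 1) * \sum_(t < k) m ^ t = m ^ k - 1.
Proof.
move=> m_gt0; elim: k => [|k IH]; first by rewrite big_ord0 muln0.
rewrite big_ord_recr /= mulnDr IH expnS; have : 0 < m ^ k by rewrite expn_gt0 m_gt0.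
by move: (m ^ k) => p p_gt0; nia.
Qed.

Lemma sum_expn_minn n m k : 1 < m -> k < n ->
  (m - 1) * \sum_(t < n) m ^ minn t k = (m - 1) * Mk n m k.
Proof.
move=> m_gt1 lt_kn; pose F t := m ^ minn t k.
rewrite /Mk -(big_mkord xpredT F) (@big_cat_nat _ _ _ k 0 n _ _ (leq0n k) (ltnW lt_kn)) /=.
rewrite (eq_big_nat _ _ (F2 := fun t => m ^ t)); last first.
  by move=> t /andP [_ /ltnW lt_tk]; rewrite /F (minn_idPl lt_tk).
rewrite (eq_big_nat _ _ (m := k) (F2 := fun=> m ^ k)); last first.
  by move=> t /andP [le_kt _]; rewrite /F (minn_idPr le_kt).
rewrite sum_nat_const_nat (big_mkord xpredT) -(geometric_sum k (ltnW m_gt1)).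
by rewrite mulKn 1?addnC //; lia.
Qed.

Lemma lt_ord_pred m (t : 'I_m.-1) : t.+1 < #|'I_m|.
Proof. by rewrite card_ord; have := ltn_ord t; lia. Qed.

Lemma connect_homo_scc (T : finType) (U : Type) (e : rel T) (R : rel U) (f : T -> U) u :
    reflexive R -> transitive R ->
    (forall x y, connect e u x -> e x y -> connect e y u -> R (f x) (f y)) ->
  forall x y, connect e u x -> connect e x y -> connect e y u -> R (f x) (f y).
Proof.
move=> reflR trR step x y ux /connectP [p]; elim: p x ux => [|z p IH] x ux /=.
  by move=> _ ->.
case/andP=> exz pz y_last yu.
have zu : connect e z u by rewrite (connect_trans _ yu) // y_last (path_connect pz (mem_last z p)).
exact: trR _ _ _ (step x z ux exz zu) (IH z (connect_trans ux (connect1 exz)) pz y_last yu).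
Qed.

(** * Strict total orders and ranks *)

Definition strict_total (T : eqType) (r : rel T) :=
  [/\ irreflexive r, transitive r & forall a b, a != b -> r a b || r b a].

Section StrictTotal.
Variables (T : eqType) (r : rel T).
Hypothesis str : strict_total r.

Lemma strict_asym a b : r a b -> r b a = false.
Proof.
case: str => irr tr _ rab; apply/negbTE/negP => rba.
by move: (irr a); rewrite (tr _ _ _ rab rba).
Qed.

Lemma strict_connex a b : a != b -> r a b = false -> r b a.
Proof. by case: str => _ _ tot /tot + rab; rewrite rab. Qed.

Lemma strict_neg a b : a != b -> r b a = ~~ r a b.
Proof.
move=> neq_ab; case rab: (r a b); first exact: strict_asym.
exact: strict_connex.
Qed.

Lemma eq_strict_total r' : r =2 r' -> strict_total r'.
Proof.
move=> eq_r; case: str => irr tr tot; split=> [a|b a c|a b]; rewrite -!eq_r //; first exact: tr.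
exact: tot.
Qed.
Lemma strict_total_inj (f : T -> T) : injective f -> strict_total (fun a b => r (f a) (f b)).
Proof.
move=> f_inj; case: str => irr tr tot; split=> [a|b a c|a b neq_ab] //; first exact: tr.
by apply: tot; rewrite (inj_eq f_inj).
Qed.
End StrictTotal.

Section Rank.
Variables (T : finType) (r : rel T).
Hypothesis str : strict_total r.

Lemma strict_total_sub r' : strict_total r' -> subrel r r' -> r' =2 r.
Proof.
move=> str' sub a b; case: (eqVneq a b) => [->|neq_ab].
  by case: str => -> _ _; case: str' => -> _ _.
case rab: (r a b); first exact: sub.
exact/(strict_asym str')/sub/(strict_connex str neq_ab).
Qed.

Definition rank a := #|[set b | r b a]|.

Lemma rank_lt a b : r a b -> rank a < rank b.
Proof.
case: str => irr tr _ rab; apply: proper_card; rewrite properE; apply/andP; split.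
  by apply/subsetP => c; rewrite !inE => /tr; apply.
by apply/subsetPn; exists a; rewrite !inE ?irr.
Qed.

Lemma rank_ltE a b : (rank a < rank b) = r a b.
Proof.
case rab: (r a b); first exact: rank_lt.
apply/negbTE; rewrite -leqNgt; case: (eqVneq a b) => [-> //|neq_ab].
exact/ltnW/rank_lt/(strict_connex str).
Qed.

Lemma rank_inj : injective rank.
Proof.
move=> a b eq_ab; apply/eqP/negPn/negP => neq_ab.
case rab: (r a b); first by move/rank_lt: rab; rewrite eq_ab ltnn.
by move/(strict_connex str neq_ab)/rank_lt: rab; rewrite eq_ab ltnn.
Qed.

Lemma rank_lt_card a : rank a < #|T|.
Proof.
rewrite -cardsT; apply: proper_card; rewrite properE subsetT /=.
by apply/subsetPn; exists a; rewrite !inE //; case: str => ->.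
Qed.

Variable x0 : T.

Definition elt t := odflt x0 [pick a | rank a == t].

Lemma rank_elt t : t < #|T| -> rank (elt t) = t.
Proof.
move=> lt_t; rewrite /elt; case: pickP => [a /eqP //|none].
pose rk a : 'I_#|T| := Ordinal (rank_lt_card a).
have rk_inj : injective rk by move=> a b /(congr1 val) /rank_inj.
have /codomP [a /(congr1 val) /= rank_a] :=
  inj_card_onto rk_inj (eq_leq (card_ord _)) (Ordinal lt_t).
by move: (none a); rewrite -rank_a eqxx.
Qed.

Lemma elt_rank a : elt (rank a) = a.
Proof. by apply: rank_inj; rewrite rank_elt // rank_lt_card. Qed.

Lemma eq_elt t a : t < #|T| -> (a == elt t) = (rank a == t).
Proof. by move=> lt_t; rewrite -(inj_eq rank_inj) rank_elt. Qed.

Lemma elt_succ t : t.+1 < #|T| -> r (elt t) (elt t.+1).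
Proof. by move=> lt_t; rewrite -rank_ltE !rank_elt // ltnW. Qed.

Lemma strict_total_succ r' : strict_total r' ->
  (forall t, t.+1 < #|T| -> r' (elt t) (elt t.+1)) -> r' =2 r.
Proof.
move=> str' succ'; apply: (strict_total_sub str') => a b rab.
have lt_b := rank_lt_card b; rewrite -(elt_rank a) -(elt_rank b).
elim: (rank b) (rank_lt rab) lt_b => // t IH.
rewrite ltnS leq_eqVlt => /orP [/eqP -> | lt_at] lt_t; first exact: succ'.
by case: str' => _ tr' _; apply: tr' (IH lt_at (ltnW lt_t)) (succ' t lt_t).
Qed.

Lemma elt_succ_neq t : t.+1 < #|T| -> elt t != elt t.+1.
Proof. by move/elt_succ; apply: contraTneq => ->; case: str => ->. Qed.

Definition adjacent_pair t a b :=
  ((a == elt t) && (b == elt t.+1)) || ((a == elt t.+1) && (b == elt t)).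

Lemma adjacent_pair_inj t t' a b : t.+1 < #|T| -> t'.+1 < #|T| ->
  adjacent_pair t a b -> adjacent_pair t' a b -> t = t'.
Proof.
move=> lt_t lt_t'; rewrite /adjacent_pair !eq_elt ?(ltnW lt_t) ?(ltnW lt_t') //.
by case/orP => /andP [/eqP -> /eqP ->]; case/orP => /andP [/eqP + /eqP]; lia.
Qed.

Lemma between_succ t z : t.+1 < #|T| -> z != elt t -> z != elt t.+1 ->
  (r z (elt t) = r z (elt t.+1)) * (r (elt t) z = r (elt t.+1) z).
Proof.
move=> lt_t; rewrite (eq_elt _ (ltnW lt_t)) (eq_elt _ lt_t) => /eqP ne_t /eqP ne_t1.
rewrite -(rank_ltE z (elt t)) -(rank_ltE z (elt t.+1)).
rewrite -(rank_ltE (elt t) z) -(rank_ltE (elt t.+1) z) !rank_elt ?(ltnW lt_t) //.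
by split; apply/idP/idP; lia.
Qed.

Lemma tperm_adjacent t a b : t.+1 < #|T| -> a != b -> ~~ adjacent_pair t a b ->
  r (tperm (elt t) (elt t.+1) a) (tperm (elt t) (elt t.+1) b) = r a b.
Proof.
move=> lt_t; rewrite /adjacent_pair.
case: tpermP => [->|->|/eqP a_t /eqP a_t1]; case: tpermP => [->|->|/eqP b_t /eqP b_t1].
all: rewrite ?eqxx ?orbT // => _ _.
all: by rewrite ?(between_succ lt_t a_t a_t1) ?(between_succ lt_t b_t b_t1).
Qed.
End Rank.

(** * CP-nets *)

Section CPnets.
Variables n m : nat.
Implicit Types (N : cpnet n m) (o x y : outcome n m) (i j : 'I_n).

Record cpnet_spec k N : Prop := CPnetSpec {
  pref_strict : forall i o, strict_total (pref N i o);
  pa_irrefl : forall i, i \notin pa N i;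
  pref_pa : forall i o o', {in pa N i, o =1 o'} -> pref N i o =2 pref N i o';
  card_pa : forall i, #|pa N i| <= k;
  acyclic_dep : acyclic N }.

Definition relevant N i j : bool :=
  [exists o : outcome n m, exists o' : outcome n m,
     [forall l, (l != j) ==> (o l == o' l)] &&
     [exists a, exists b, pref N i o a b != pref N i o' a b]].

Definition nondummy N := forall i, {subset pa N i <= relevant N i}.

Lemma valid_cpnetP k N : valid_cpnet k N <-> cpnet_spec k N /\ nondummy N.
Proof.
split.
  case/and5P => /forallP irr /forallP tr /forallP tot /forallP pa_i.
  case/and4P => /forallP ctx /forallP nd /forallP bound acyc.
  split=> [|i j /(forall_inP (nd i))] //; split=> // [i o|i o o' eq_oo' a b].
    split=> [a|b a c|a b].
    - by apply/negbTE; move/forallP: (irr i) => /(_ o)/forallP.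
    - move=> rab rbc; move/forallP: (tr i) => /(_ o)/forallP/(_ a)/forallP/(_ b)/forallP/(_ c).
      by rewrite rab rbc.
    - by move/forallP: (tot i) => /(_ o)/forallP/(_ a)/forallP/(_ b)/implyP.
  move/forallP: (ctx i) => /(_ o)/forallP/(_ o')/implyP ctx_i.
  have /ctx_i : [forall j in pa N i, o j == o' j] by apply/forall_inP => j /eq_oo' ->.
  by move/forallP/(_ a)/forallP/(_ b)/eqP.
case=> [[str pa_i ctx bound acyc] nd].
apply/and5P; split; try apply/forallP => i; try apply/forallP => o.
- by apply/forallP => a; case: (str i o) => ->.
- do 3 apply/forallP => ?; apply/implyP => /andP [rab rbc].
  by case: (str i o) => _ tr _; apply: tr _ _ _ rab rbc.
- by do 2 apply/forallP => ?; apply/implyP; case: (str i o) => _ _; apply.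
- exact: pa_i.
apply/and4P; split=> //; apply/forallP => i.
- apply/forallP => o; apply/forallP => o'; apply/implyP => /forall_inP eq_oo'.
  by do 2 apply/forallP => ?; rewrite (ctx i o o') // => j /eq_oo' /eqP.
- exact/forall_inP/nd.
- exact: bound.
Qed.

Lemma eq_concept N N' : (forall i o, pref N' i o =2 pref N i o) -> concept N' =1 concept N.
Proof.
move=> eq_pref x; have eq_flip : iflip N' =2 iflip N.
  by move=> o o'; apply: eq_existsb => i; rewrite eq_pref.
by apply: eq_existsb => o; rewrite eq_flip (eq_connect eq_flip).
Qed.

Lemma iflip_pref N x y j : iflip N x y -> (y j == x j) || pref N j x (y j) (x j).
Proof.
case/existsP => i /and3P [/forallP same _ better].
by case: (eqVneq j i) => [->|/(implyP (same j))->] //; rewrite better orbT.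
Qed.

Definition anc N j := #|[set p | connect (dep_edge N) p j]|.

Lemma anc_lt N p j : acyclic N -> p \in pa N j -> anc N p < anc N j.
Proof.
move=> /forallP acyc pj; apply: proper_card; rewrite properE; apply/andP; split.
  by apply/subsetP => q; rewrite !inE => /connect_trans; apply; apply: connect1.
apply/subsetPn; exists j; rewrite !inE ?connect0 //.
exact: (implyP (forallP (acyc p) j)).
Qed.

Lemma acyclic_rank N (f : 'I_n -> nat) :
  (forall i, {in pa N i, forall p, f p < f i}) -> acyclic N.
Proof.
move=> lt_f; apply/forallP => i; apply/forallP => j; apply/implyP => ij.
apply/negP => ji.
have step p q : connect (dep_edge N) j p -> dep_edge N p q -> connect (dep_edge N) q j ->
    f p <= f q.
  by move=> _ pq _; apply/ltnW/lt_f.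
have := connect_homo_scc leqnn leq_trans step (connect0 _ j) ji (connect1 ij).
by rewrite leqNgt lt_f.
Qed.

Definition upd o j v : outcome n m := [ffun l => if l == j then v else o l].

Lemma updE o j v l : upd o j v l = if l == j then v else o l.
Proof. by rewrite ffunE. Qed.

Definition agree_off i x y := forall l, l != i -> x l = y l.

Section Spec.
Variables (k : nat) (N : cpnet n m).
Hypothesis V : cpnet_spec k N.

Lemma pref_irrefl i o a : pref N i o a a = false.
Proof. by case: (pref_strict V i o). Qed.

Lemma pa_neq i p : p \in pa N i -> p != i.
Proof. by apply: contraTneq => ->; apply: pa_irrefl V i. Qed.

Lemma pref_agree_off i x y : agree_off i x y -> pref N i x =2 pref N i y.
Proof.
by move=> xy; apply: (pref_pa V) => l /pa_neq; apply: xy.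
Qed.

(* Among the variables that change along a cycle, one with fewest ancestors sees its parents
   fixed, so its value can only improve along the cycle; yet it changes and comes back. *)
Lemma iflip_acyclic u v : iflip N u v -> connect (iflip N) v u = false.
Proof.
move=> uv; apply/negP => vu.
pose scc := [pred z | connect (iflip N) u z && connect (iflip N) z u].
pose C := [pred j | [exists z in scc, z j != u j]].
have [i0 /and3P [_ v_i0 _]] := existsP uv.
have C_i0 : C i0 by apply/exists_inP; exists v; rewrite // inE connect1.
case: (arg_minnP (anc N) C_i0) => j /exists_inP [z scc_z z_j] min_j.
have pa_fixed w : w \in scc -> {in pa N j, w =1 u}.
  move=> scc_w p p_pa; apply/eqP; apply: contraTT (anc_lt (acyclic_dep V) p_pa).
  by rewrite -leqNgt => w_p; apply: min_j; apply/exists_inP; exists w.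
pose R a b := (b == a) || pref N j u b a.
have [irr tr _] := pref_strict V j u.
have reflR : reflexive R by move=> a; rewrite /R eqxx.
have trR : transitive R.
  move=> b a c /orP [/eqP -> //|rba] /orP [/eqP ->|rcb]; first by rewrite /R rba orbT.
  by rewrite /R (tr _ _ _ rcb rba) orbT.
have step x y : connect (iflip N) u x -> iflip N x y -> connect (iflip N) y u -> R (x j) (y j).
  move=> ux xy yu; rewrite /R -(pref_pa V (pa_fixed x _)); first exact: iflip_pref.
  by rewrite inE ux (connect_trans (connect1 xy) yu).
have /andP [uz zu] := scc_z.
have := connect_homo_scc reflR trR step (connect0 _ u) uz zu.
have := connect_homo_scc reflR trR step uz zu (connect0 _ u).
by rewrite /R eq_sym (negbTE z_j) /= => /(tr _ _ _) /[apply]; rewrite irr.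
Qed.

Lemma concept_swap i x y : agree_off i x y -> x i != y i ->
  concept N (x, y) = pref N i y (x i) (y i).
Proof.
move=> xy neq_i; rewrite /concept /succ /=.
case better: (pref N i y (x i) (y i)).
  apply/existsP; exists x; rewrite connect0 andbT.
  apply/existsP; exists i; apply/and3P; split=> //.
  by apply/forallP => l; apply/implyP => /xy ->.
apply/existsP => -[o /andP [yo ox]].
have xy_flip : iflip N x y.
  apply/existsP; exists i; apply/and3P; split; last 1 first.
  - by rewrite (pref_agree_off xy) (strict_connex (pref_strict V i y) neq_i better).
  - by apply/forallP => l; apply/implyP => /xy ->.
  - by rewrite eq_sym.
by move: (iflip_acyclic yo); rewrite (connect_trans ox (connect1 xy_flip)).
Qed.

Definition orient (X : {set outcome n m * outcome n m}) (w : outcome n m * outcome n m) :=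
  if w \in X then w else (w.2, w.1).

Lemma concept_orient X i x y : agree_off i x y -> x i != y i ->
  concept N (orient X (x, y)) =
    if (x, y) \in X then pref N i y (x i) (y i) else ~~ pref N i y (x i) (y i).
Proof.
move=> xy neq_i; rewrite /orient; case: ifP => _; first exact: concept_swap.
have yx : agree_off i y x by move=> l /xy ->.
rewrite (concept_swap yx) 1?eq_sym // (pref_agree_off xy).
exact: (strict_neg (pref_strict V i y)).
Qed.

Definition relevant_pa i := [set j | relevant N i j].

Lemma pref_irrelevant i j o v : ~~ relevant N i j -> pref N i (upd o j v) =2 pref N i o.
Proof.
move=> /existsPn /(_ (upd o j v)) /existsPn /(_ o); rewrite negb_and => /orP [].
  by case/forallPn => l; rewrite negb_imply updE => /andP [/negbTE ->]; rewrite eqxx.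
by move=> /existsPn same a b; move: (same a) => /existsPn /(_ b); rewrite negbK => /eqP.
Qed.

Lemma relevant_pa_sub i : relevant_pa i \subset pa N i.
Proof.
apply/subsetP => j; rewrite inE; apply: contraTT => j_pa; rewrite /relevant.
apply/existsPn => o; apply/existsPn => o'.
apply/negP => /andP [/forallP same /existsP [a /existsP [b /eqP]]]; apply.
apply: (pref_pa V) => l l_pa; apply/eqP/(implyP (same l)).
by apply: contraNneq j_pa => <-.
Qed.

Lemma pref_relevant i o o' : {in relevant_pa i, o =1 o'} -> pref N i o =2 pref N i o'.
Proof.
move: {2}#|_| (leqnn #|[set j | o j != o' j]|) => d; elim: d o => [|d IH] o le_d rel_oo'.
all: case: (pickP (fun j => o j != o' j)) => [j neq_j|same];
  try by have -> : o = o' by apply/ffunP => l; apply/eqP/negbFE/same.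
  by move: le_d; rewrite leqn0 => /eqP/cards0_eq/setP/(_ j); rewrite !inE neq_j.
have irr_j : ~~ relevant N i j by apply: contra neq_j; rewrite -inE => /rel_oo' ->.
move=> a b; rewrite -(pref_irrelevant o (o' j) irr_j); apply: IH => [|l l_rel].
  rewrite -ltnS; apply: leq_trans le_d; apply: proper_card; rewrite properE; apply/andP; split.
    by apply/subsetP => l; rewrite !inE updE; case: (eqVneq l j) => [->|//]; rewrite eqxx.
  by apply/subsetPn; exists j; rewrite !inE ?updE ?eqxx.
by rewrite updE; case: (eqVneq l j) => [->|_]; last exact: rel_oo'.
Qed.
End Spec.

Lemma concept_orient_eq k k' N N' X i x y : cpnet_spec k N -> cpnet_spec k' N' ->
    agree_off i x y -> x i != y i ->
  concept N' (orient X (x, y)) = concept N (orient X (x, y)) ->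
  pref N' i y (x i) (y i) = pref N i y (x i) (y i).
Proof.
move=> V V' xy neq_i; rewrite (concept_orient V X xy neq_i) (concept_orient V' X xy neq_i).
by case: ifP => // _ /negb_inj.
Qed.

Lemma orient_in X i x y : swap_space X -> agree_off i x y -> x i != y i ->
  orient X (x, y) \in X.
Proof.
case/andP => _ /forallP /(_ (x, y)) /implyP sw xy neq_i; rewrite /orient.
case: ifP => // /negbT notX; move: sw; rewrite (negbTE notX) /=; apply.
by apply/existsP; exists i; rewrite neq_i; apply/forallP => l; apply/implyP => /xy ->.
Qed.

Lemma swap_spaceP X w : swap_space X -> w \in X -> exists i, agree_off i w.1 w.2 /\ w.1 i != w.2 i.
Proof.
case/andP => /forallP /(_ w) /implyP sw _ /sw /existsP [i /andP [neq_i /forallP same]].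
by exists i; split=> // l /(implyP (same l)) /eqP.
Qed.

Definition normalize N : cpnet n m := ([ffun i => relevant_pa N i], N.2).

Lemma concept_normalize N : concept (normalize N) =1 concept N.
Proof. exact: eq_concept. Qed.

Lemma normalize_valid k N : cpnet_spec k N -> valid_cpnet k (normalize N).
Proof.
move=> V; have pa_norm i : pa (normalize N) i = relevant_pa N i by rewrite /pa ffunE.
have sub i := relevant_pa_sub V i.
apply/valid_cpnetP; split=> [|i j]; last by rewrite pa_norm inE.
split=> [|i|i o o'|i|]; rewrite ?pa_norm.
- exact: pref_strict V.
- by apply: contra (pa_irrefl V i); apply/subsetP.
- exact: pref_relevant.
- exact: leq_trans (subset_leq_card (sub i)) (card_pa V i).
apply: (acyclic_rank (f := anc N)) => i p; rewrite pa_norm => /(subsetP (sub i)).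
exact: anc_lt (acyclic_dep V).
Qed.
End CPnets.

Section Extension.
Variables n m : nat.

Definition ext (i : 'I_n) (s : {ffun 'I_n.-1 -> 'I_m}) (a : 'I_m) : outcome n m :=
  [ffun j => if unlift i j is Some t then s t else a].

Lemma ext_at i s a : ext i s a i = a.
Proof. by rewrite ffunE unlift_none. Qed.

Lemma ext_lift i s a t : ext i s a (lift i t) = s t.
Proof. by rewrite ffunE liftK. Qed.

Lemma ext_agree_off i s a b : agree_off i (ext i s a) (ext i s b).
Proof. by move=> j; case: (unliftP i j) => [t ->|->]; rewrite ?ext_lift ?eqxx. Qed.

Lemma upd_ext_at i s a p v : p != i -> upd (ext i s a) p v i = a.
Proof. by move=> p_i; rewrite updE eq_sym (negbTE p_i) ext_at. Qed.

Lemma upd_ext_agree_off i s a b p v : agree_off i (upd (ext i s a) p v) (upd (ext i s b) p v).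
Proof. by move=> l l_i; rewrite !updE; case: ifP => // _; apply: ext_agree_off. Qed.

Lemma k_covering_ext k (S : {set {ffun 'I_n.-1 -> 'I_m}}) (i : 'I_n) (K : {set 'I_n})
    (o : outcome n m) (a : 'I_m) :
    @k_covering n m k S -> k <= n.-1 -> i \notin K -> #|K| <= k ->
  exists2 s, s \in S & {in K, ext i s a =1 o}.
Proof.
move=> covS le_k iK le_K; pose K' := lift i @^-1: K.
have le_K' : #|K'| <= k.
  rewrite -(card_imset _ (lift_inj (h := i))) (leq_trans _ le_K) // subset_leq_card //.
  by apply/subsetP => _ /imsetP [t t_K' ->]; rewrite inE in t_K'.
have le_kT : k <= #|[set: 'I_n.-1]| by rewrite cardsT card_ord.
have [C [K'C _ /eqP card_C]] := card_between (subsetT K') le_K' le_kT.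
have /existsP [s /andP [s_S /forall_inP s_C]] :=
  forallP (implyP (forallP covS C) card_C) [ffun t => o (lift i t)].
exists s => // j j_K; case: (unliftP i j) => [t eq_j|eq_j]; last by rewrite -eq_j j_K in iK.
rewrite eq_j ext_lift; have /s_C /eqP -> : t \in C by rewrite (subsetP K'C) // inE -eq_j.
by rewrite ffunE.
Qed.
End Extension.

(** * The upper bound *)

Section UpperBound.
Variables (n m k : nat) (X : {set outcome n m * outcome n m}) (N : cpnet n m).
Variables (S : {set {ffun 'I_n.-1 -> 'I_m}}) (a0 : 'I_m).
Hypotheses (V : cpnet_spec k N) (ND : nondummy N) (SX : swap_space X).
Hypotheses (covS : @k_covering n m k S) (le_k : k <= n.-1).

Definition order_swap (i : 'I_n) s (t : 'I_m.-1) :=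
  let r := pref N i (ext i s a0) in orient X (ext i s (elt r a0 t), ext i s (elt r a0 t.+1)).

Definition edge_witness (i p : 'I_n) (q : {ffun 'I_n.-1 -> 'I_m} * 'I_m * 'I_m * 'I_m) :=
  let: (s, v, a, b) := q in
  (s \in S) && (pref N i (ext i s a0) a b != pref N i (upd (ext i s a0) p v) a b).

(* The fallback is never used: every parent of v_i has a witness ([edge_witness_exists]). *)
Definition edge_swap (i p : 'I_n) :=
  if [pick q | edge_witness i p q] is Some (s, v, a, b)
  then orient X (upd (ext i s a) p v, upd (ext i s b) p v)
  else ([ffun=> a0], [ffun=> a0]).

Definition teaching_sample := \bigcup_i
  ([set order_swap i s t | s in S, t in [set: 'I_m.-1]] :|: [set edge_swap i p | p in pa N i]).

Lemma edge_witness_exists i p : p \in pa N i -> exists q, edge_witness i p q.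
Proof.
move=> p_pa; have /existsP [o /existsP [o' /andP [/forallP same]]] := ND p_pa.
case/existsP => a /existsP [b diff].
have [s s_S eq_s] := k_covering_ext o a0 covS le_k (pa_irrefl V i) (card_pa V i).
have eq_v : {in pa N i, upd (ext i s a0) p (o' p) =1 o'}.
  move=> l l_pa; rewrite updE; case: eqP => [-> //|/eqP l_p].
  by rewrite eq_s //; apply/eqP/(implyP (same l)).
by exists (s, o' p, a, b); rewrite /= s_S (pref_pa V eq_s) (pref_pa V eq_v).
Qed.

Lemma edge_swapP i p : p \in pa N i -> exists s v a b,
  [/\ s \in S, a != b, pref N i (ext i s a0) a b != pref N i (upd (ext i s a0) p v) a b &
      edge_swap i p = orient X (upd (ext i s a) p v, upd (ext i s b) p v)].
Proof.
move=> p_pa; rewrite /edge_swap; case: pickP => [[[[s v] a] b] /andP [s_S diff]|none].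
  exists s, v, a, b; split=> //.
  by apply: contra_neq diff => ->; rewrite !(pref_irrefl V).
by have [q] := edge_witness_exists p_pa; rewrite none.
Qed.

Lemma teaching_sample_sub : teaching_sample \subset X.
Proof.
apply/subsetP => w /bigcupP [i _]; rewrite inE => /orP [/imset2P [s t _ _ ->]|/imsetP [p p_pa ->]].
  rewrite /order_swap; apply: (orient_in SX (ext_agree_off s _ _)); rewrite !ext_at.
  by apply: (elt_succ_neq (pref_strict V i _)); apply: lt_ord_pred.
have [s [v [a [b [_ neq_ab _ ->]]]]] := edge_swapP p_pa.
by apply: (orient_in SX (upd_ext_agree_off s a b p v)); rewrite !upd_ext_at ?(pa_neq V).
Qed.

Lemma card_teaching_sample : #|teaching_sample| <= n * (#|S| * m.-1) + edges N.
Proof.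
apply: (leq_trans (card_bigcup_le _)); rewrite /edges.
have -> : n * (#|S| * m.-1) = \sum_(i < n) #|S| * m.-1 by rewrite big_const_ord iter_addn_0 mulnC.
rewrite -big_split leq_sum // => i _.
rewrite (leq_trans (leq_card_setU _ _)) // leq_add ?leq_imset_card //.
by rewrite curry_imset2X (leq_trans (leq_imset_card _ _)) // cardsX cardsT card_ord.
Qed.

Section Consistent.
Variable N' : cpnet n m.
Hypotheses (V' : cpnet_spec k N') (agree : {in teaching_sample, concept N' =1 concept N}).

Lemma consistent_pref_ext i s : s \in S -> pref N' i (ext i s a0) =2 pref N i (ext i s a0).
Proof.
move=> s_S; apply: (strict_total_succ (x0 := a0) (pref_strict V i _) (pref_strict V' i _)).
move=> t lt_t.
have lt_t' : t < m.-1 by move: lt_t; rewrite card_ord; lia.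
have /agree : order_swap i s (Ordinal lt_t') \in teaching_sample.
  by apply/bigcupP; exists i; rewrite // inE imset2_f ?inE.
set a := elt _ a0 t; set b := elt _ a0 t.+1.
move/(concept_orient_eq V V' (ext_agree_off s a b)); rewrite !ext_at.
rewrite -(pref_agree_off V (ext_agree_off s a0 b)).
rewrite -(pref_agree_off V' (ext_agree_off s a0 b)) => ->.
  exact: elt_succ (pref_strict V i _) _ _ lt_t.
exact: elt_succ_neq (pref_strict V i _) _ _ lt_t.
Qed.

Lemma consistent_pa i : pa N i \subset pa N' i.
Proof.
apply/subsetP => p p_pa; apply: contraT => p_pa'.
have [s [v [a [b [s_S neq_ab diff eq_swap]]]]] := edge_swapP p_pa.
have /agree : edge_swap i p \in teaching_sample.
  by apply/bigcupP; exists i; rewrite // inE imset_f ?orbT.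
rewrite eq_swap => /(concept_orient_eq V V' (upd_ext_agree_off s a b p v)).
rewrite !upd_ext_at ?(pa_neq V) // -(pref_agree_off V (upd_ext_agree_off s a0 b p v)).
rewrite -(pref_agree_off V' (upd_ext_agree_off s a0 b p v)).
have eq_ctx : {in pa N' i, upd (ext i s a0) p v =1 ext i s a0}.
  by move=> l l_pa; rewrite updE; case: eqP => // eq_lp; rewrite -eq_lp l_pa in p_pa'.
rewrite (pref_pa V' eq_ctx) consistent_pref_ext // => /(_ neq_ab) eq_ab.
by rewrite eq_ab eqxx in diff.
Qed.

Lemma consistent_concept : concept N' =1 concept N.
Proof.
apply: eq_concept => i o a b.
have [s s_S eq_s] := k_covering_ext o a0 covS le_k (pa_irrefl V' i) (card_pa V' i).
rewrite -(pref_pa V' eq_s) consistent_pref_ext //.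
by apply: (pref_pa V) => l /(subsetP (consistent_pa i)) /eq_s.
Qed.
End Consistent.

Lemma teaching_sample_teaches : teaching_set k X teaching_sample N.
Proof.
rewrite /teaching_set teaching_sample_sub; apply/forallP => N'.
apply/implyP => /valid_cpnetP [V' _].
apply/implyP => /forall_inP agree; apply/forall_inP => w _.
by rewrite (consistent_concept V') // => x /agree /eqP.
Qed.
End UpperBound.

(** * The lower bound *)

Section LowerBound.
Variables (n m k : nat) (X : {set outcome n m * outcome n m}) (N : cpnet n m) (a0 : 'I_m).
Hypothesis V : cpnet_spec k N.

(* A topological order of the dependency graph: by number of ancestors, then by index. *)
Definition key (j : 'I_n) := anc N j * n + j.

Lemma key_inj : injective key.
Proof.
move=> i j eq_key; apply: val_inj.
by have := congr1 (modn^~ n) eq_key; rewrite !modnMDl !modn_small.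
Qed.

Lemma key_pa i p : p \in pa N i -> key p < key i.
Proof.
move/(anc_lt (acyclic_dep V)); rewrite /key.
by have := ltn_ord p; have := ltn_ord i; move: (anc N p) (anc N i) => x y; nia.
Qed.

Definition earlier i := [set j | key j < key i].

Lemma card_earlier i : #|earlier i| < n.
Proof.
rewrite -[X in _ < X]card_ord -cardsT; apply: proper_card; rewrite properE subsetT /=.
by apply/subsetPn; exists i; rewrite ?inE ?ltnn.
Qed.

Lemma card_earlier_inj : injective (fun i => Ordinal (card_earlier i)).
Proof.
have lt_card i j : key i < key j -> #|earlier i| < #|earlier j|.
  move=> lt_ij; apply: proper_card; rewrite properE; apply/andP; split.
    by apply/subsetP => l; rewrite !inE => /ltn_trans; apply.
  by apply/subsetPn; exists i; rewrite !inE ?ltnn.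
move=> i j /(congr1 val) /= eq_card.
by case: (ltngtP (key i) (key j)) => [/lt_card|/lt_card|/key_inj //]; rewrite eq_card ltnn.
Qed.

Definition ctx_vars i : {set 'I_n} :=
  odflt set0 [pick Q : {set 'I_n} |
    [&& pa N i \subset Q, Q \subset earlier i & #|Q| == minn #|earlier i| k]].

Lemma ctx_varsP i : [/\ pa N i \subset ctx_vars i, ctx_vars i \subset earlier i
  & #|ctx_vars i| = minn #|earlier i| k].
Proof.
rewrite /ctx_vars; case: pickP => [Q /and3P [? ? /eqP ?] //|none].
have pa_earlier : pa N i \subset earlier i by apply/subsetP => p /key_pa; rewrite inE.
have le_pa : #|pa N i| <= minn #|earlier i| k by rewrite leq_min subset_leq_card ?card_pa.
have [Q [? ? card_Q]] := card_between pa_earlier le_pa (geq_minl _ _).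
by move: (none Q); rewrite card_Q eqxx !andbT => /andP [].
Qed.

Lemma sum_ctx_vars : 1 < m -> k < n -> \sum_i m ^ #|ctx_vars i| * m.-1 = (m - 1) * Mk n m k.
Proof.
move=> m_gt1 lt_kn; rewrite -sum_expn_minn //.
rewrite (reindex_inj card_earlier_inj (P := xpredT) (F := fun t : 'I_n => m ^ minn t k)).
rewrite big_distrr /=.
by apply: eq_bigr => i _; have [_ _ ->] := ctx_varsP i; rewrite mulnC subn1.
Qed.
Hypothesis SX : swap_space X.

Section SwapNet.
Variables (i : 'I_n) (g : outcome n m) (t : nat).
Let a := elt (pref N i g) a0 t.
Let b := elt (pref N i g) a0 t.+1.

(* v_i gets the parents [ctx_vars i], on which it can tell whether a context extends g. *)
Definition swap_net : cpnet n m :=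
  ([ffun j => if j == i then ctx_vars i else pa N j],
   [ffun jo : 'I_n * outcome n m =>
      if (jo.1 == i) && [forall l in ctx_vars i, jo.2 l == g l]
      then [ffun xy : 'I_m * 'I_m => pref N i jo.2 (tperm a b xy.1) (tperm a b xy.2)]
      else N.2 jo]).

Lemma swap_net_pa j : pa swap_net j = if j == i then ctx_vars i else pa N j.
Proof. by rewrite /pa ffunE. Qed.

Lemma swap_net_pref j o : pref swap_net j o =2
  if (j == i) && [forall l in ctx_vars i, o l == g l]
  then fun x y => pref N i o (tperm a b x) (tperm a b y) else pref N j o.
Proof. by move=> x y; rewrite /pref ffunE /=; case: ifP; rewrite ?ffunE. Qed.

Lemma swap_net_spec : cpnet_spec k swap_net.
Proof.
have [pa_ctx ctx_earlier card_ctx] := ctx_varsP i.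
split=> [j o|j|j o o' eq_oo'|j|].
- apply: eq_strict_total (fun x y => esym (swap_net_pref j o x y)).
  case: ifP => _; last exact: pref_strict V j o.
  exact: (@strict_total_inj _ _ (pref_strict V i o) _ (@perm_inj _ (tperm a b))).
- rewrite swap_net_pa; case: (eqVneq j i) => [->|_]; last exact: pa_irrefl V j.
  by apply: contraT => /negbNE /(subsetP ctx_earlier); rewrite inE ltnn.
- move: eq_oo'; rewrite swap_net_pa => eq_oo' x y; rewrite !swap_net_pref.
  case: (eqVneq j i) eq_oo' => /= [-> eq_oo'|_ eq_oo']; last exact: (pref_pa V eq_oo').
  have -> : [forall l in ctx_vars i, o l == g l] = [forall l in ctx_vars i, o' l == g l].
    by apply: eq_forallb_in => l /eq_oo' ->.
  by case: ifP => _; rewrite (pref_pa V (o' := o')) // => l /(subsetP pa_ctx) /eq_oo'.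
- by rewrite swap_net_pa; case: ifP => _; rewrite ?card_ctx ?geq_minr ?card_pa.
apply: (acyclic_rank (f := key)) => j p; rewrite swap_net_pa.
case: (eqVneq j i) => [->|_] p_pa; last exact: key_pa.
by move: p_pa => /(subsetP ctx_earlier); rewrite inE.
Qed.

Lemma swap_net_diff w : t.+1 < #|'I_m| -> w \in X -> concept swap_net w != concept N w ->
  [/\ agree_off i w.1 w.2, w.1 i != w.2 i, {in ctx_vars i, w.2 =1 g}
     & adjacent_pair (pref N i g) a0 t (w.1 i) (w.2 i)].
Proof.
move=> lt_t /(swap_spaceP SX) [j [agree_j neq_j]].
case: w agree_j neq_j => x y /= agree_j neq_j.
rewrite (concept_swap swap_net_spec agree_j neq_j) (concept_swap V agree_j neq_j) swap_net_pref.
case: (eqVneq j i) => [eq_ji|_]; last by rewrite eqxx.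
subst j; case: (boolP [forall l in ctx_vars i, y l == g l]); last by rewrite eqxx.
move=> /forall_inP y_g.
have [pa_ctx _ _] := ctx_varsP i.
have eq_y : pref N i y =2 pref N i g.
  by apply: (pref_pa V) => l l_pa; apply/eqP; apply: y_g; apply: (subsetP pa_ctx).
rewrite /= !eq_y => diff; split=> //; first by move=> l l_ctx; apply/eqP; apply: y_g.
apply: contraNT diff => not_adj.
exact/eqP/(tperm_adjacent (pref_strict V i g) lt_t neq_j not_adj).
Qed.

Lemma swap_net_witness : t.+1 < #|'I_m| -> exists2 w, w \in X & concept swap_net w != concept N w.
Proof.
move=> lt_t; have [pa_ctx ctx_earlier _] := ctx_varsP i.
have lt_ab := elt_succ (pref_strict V i g) a0 lt_t.
have neq_ab := elt_succ_neq (pref_strict V i g) a0 lt_t.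
pose x := upd g i a; pose y := upd g i b.
have agree_xy : agree_off i x y by move=> l l_i; rewrite !updE (negbTE l_i).
have [x_i y_i] : x i = a /\ y i = b by rewrite !updE eqxx.
have y_g l : l \in ctx_vars i -> y l = g l.
  move=> l_ctx; rewrite updE; case: eqP l_ctx => [-> /(subsetP ctx_earlier)|//].
  by rewrite inE ltnn.
have eq_y : pref N i y =2 pref N i g by apply: (pref_pa V) => l /(subsetP pa_ctx) /y_g.
have neq_xy : x i != y i by rewrite x_i y_i.
exists (orient X (x, y)); first exact: orient_in SX agree_xy neq_xy.
apply/negP => /eqP /(concept_orient_eq V swap_net_spec agree_xy neq_xy).
rewrite swap_net_pref eqxx.
have -> : [forall l in ctx_vars i, y l == g l] by apply/forall_inP => l /y_g ->.
rewrite /= x_i y_i !eq_y tpermL tpermR lt_ab.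
by rewrite (strict_asym (pref_strict V i g) lt_ab).
Qed.
End SwapNet.

Lemma teaching_set_hits S i g t : teaching_set k X S N -> t.+1 < #|'I_m| ->
  exists2 w, w \in S & concept (swap_net i g t) w != concept N w.
Proof.
case/andP => _ /forallP teach lt_t.
have [w w_X diff] := swap_net_witness i g lt_t.
(* [swap_net] may have dummy parents; its normalization is in the class. *)
set N' := normalize (swap_net i g t).
have /implyP/(_ (normalize_valid (swap_net_spec i g t)))/implyP agree_S := teach N'.
apply/exists_inP; apply: contraT => /exists_inPn same.
suff /agree_S /forall_inP /(_ w w_X) : [forall w in S, concept N' w == concept N w].
  by rewrite concept_normalize (negbTE diff).
by apply/forall_inP => x /same; rewrite concept_normalize negbK.
Qed.

Lemma swap_net_diff_uniq i i' g g' (t t' : 'I_m.-1) w :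
    g \in pffun_on a0 (ctx_vars i) [set: 'I_m] -> g' \in pffun_on a0 (ctx_vars i') [set: 'I_m] ->
    w \in X -> concept (swap_net i g t) w != concept N w ->
    concept (swap_net i' g' t') w != concept N w ->
  (i, (g, t)) = (i', (g', t')).
Proof.
move=> /pffun_onP [/subsetP g_ctx _] /pffun_onP [/subsetP g'_ctx _] w_X diff diff'.
have [agree_i neq_i eq_g adj] := swap_net_diff (lt_ord_pred t) w_X diff.
have [agree_i' neq_i' eq_g' adj'] := swap_net_diff (lt_ord_pred t') w_X diff'.
have eq_i : i = i' by apply: contraTeq neq_i => /agree_i' ->; rewrite eqxx.
subst i'; have eq_gg' : g = g'.
  apply/ffunP => l; case: (boolP (l \in ctx_vars i)) => [l_ctx|l_ctx].
    by rewrite -eq_g -?eq_g'.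
  by rewrite (eqP (contraR (g_ctx l) l_ctx)) (eqP (contraR (g'_ctx l) l_ctx)).
subst g'; congr (_, (_, _)); apply: ord_inj.
exact (adjacent_pair_inj (pref_strict V i g) (lt_ord_pred t) (lt_ord_pred t') adj adj').
Qed.

Lemma card_teaching_set S : teaching_set k X S N -> \sum_i m ^ #|ctx_vars i| * m.-1 <= #|S|.
Proof.
move=> teachS; have /andP [S_X _] := teachS.
pose G i := [set g in pffun_on a0 (ctx_vars i) [set: 'I_m]].
pose D := [set q : 'I_n * (outcome n m * 'I_m.-1) | q.2 \in setX (G q.1) setT].
have -> : \sum_i m ^ #|ctx_vars i| * m.-1 = #|D|.
  rewrite (card_dep_setX (fun i => setX (G i) [set: 'I_m.-1])); apply: eq_bigr => i _.
  by rewrite cardsX cardsT !card_ord cardsE card_pffun_on cardsT card_ord.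
pose P (q : 'I_n * (outcome n m * 'I_m.-1)) w :=
  (w \in X) && (concept (swap_net q.1 q.2.1 q.2.2) w != concept N w).
apply: (leq_card_hitting (P := P)) => [[i [g t]] _|[i [g t]] [i' [g' t']]].
  have [w w_S diff] := teaching_set_hits i g teachS (lt_ord_pred t).
  by exists w; rewrite // /P (subsetP S_X).
rewrite !inE /= => /andP [g_G _] /andP [g'_G _] w /andP [w_X diff] /andP [_ diff'].
exact: swap_net_diff_uniq g_G g'_G w_X diff diff'.
Qed.
End LowerBound.

Lemma Uk_attained n m k : exists2 S, @k_covering n m k S & #|S| = Uk n m k.
Proof.
rewrite /Uk; elim/big_ind: _ => [|a b [S covS <-] [S' covS' <-]|S covS]; last by exists S.
  exists setT; rewrite ?cardsT //; apply/forallP => K; apply/implyP => _.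
  by apply/forallP => v; apply/exists_inP; exists v; rewrite ?inE //; apply/forall_inP.
by rewrite /minn; case: ltnP => _; [exists S | exists S'].
Qed.

Section TeachingDimension.
Variables (n m k : nat) (X : {set outcome n m * outcome n m}) (N : cpnet n m).

Lemma TD_le_card S : teaching_set k X S N -> TD k X N <= #|S|.
Proof. exact: (geq_bigmin_cond (fun S : {set outcome n m * outcome n m} => #|S|) #|X|). Qed.

Lemma leq_TD v : (forall S, teaching_set k X S N -> v <= #|S|) -> v <= TD k X N.
Proof.
move=> le_v; apply: leq_bigmin => //; apply: le_v.
by rewrite /teaching_set subxx; apply/forallP => N'; apply/implyP => _; apply/implyP.
Qed.
End TeachingDimension.

Theorem lemma10 (n m k : nat) (X : {set outcome n m * outcome n m})
    (N : cpnet n m) :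
  1 <= n -> 2 <= m -> k <= n - 1 ->
  swap_space X -> valid_cpnet k N ->
  (m - 1) * Mk n m k <= TD k X N /\ TD k X N <= edges N + n * (m - 1) * Uk n m k.
Proof.
move=> n_gt0 m_gt1 le_k SX /valid_cpnetP [V ND].
have a0 : 'I_m := Ordinal (ltnW m_gt1).
split.
  rewrite -(sum_ctx_vars V) //; last lia.
  by apply: leq_TD => S /(card_teaching_set a0 V SX).
have [S covS <-] := Uk_attained n m k.
have le_k' : k <= n.-1 by rewrite -subn1.
apply: leq_trans (TD_le_card (teaching_sample_teaches a0 V ND SX covS le_k')) _.
apply: leq_trans (card_teaching_sample X N S a0) _.
by rewrite addnC subn1 -mulnA (mulnC #|S|).
Qed.
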